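(* Let $k$ be a commutative ring, $A$ a $k$-algebra, $B$ a $k$-algebra with a $k$-algebra morphism $B\to A$, and $\mathfrak{C}$ an $A$-coring (with coinciding left and right $k$-actions). Consider the Morita context $\mathbb{N}_B(\mathfrak{C},{}^*\mathfrak{C})$ with connecting map $\circ:{}_B\mathrm{Hom}_{{}^*\mathfrak{C}}({}^*\mathfrak{C},\mathfrak{C})\otimes{}_B\mathrm{Hom}_{{}^*\mathfrak{C}}(\mathfrak{C},{}^*\mathfrak{C})\to{}_B\mathrm{End}_{{}^*\mathfrak{C}}(\mathfrak{C})$, $\bar\jmath\otimes j\mapsto\bar\jmath\circ j$. Then: (i) $\mathfrak{C}$ is left $B$-locally Frobenius if and only if there exists a locally left invertible element for $\circ$; (ii) $\mathfrak{C}$ is left $B$-locally quasi-Frobenius if and only if $\circ$ is locally surjective. Under any of these conditions, $\mathfrak{C}$ is weakly locally projective as a right $A$-module.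
   Context: $\mathfrak{C}$ has coassociative comultiplication $\Delta(c)=c_{(1)}\otimes_Ac_{(2)}$ and counit $\varepsilon$; ${}^*\mathfrak{C}={}_A\mathrm{Hom}(\mathfrak{C},A)$ is a ring with unit $\varepsilon$ and product $(f*g)(c)=g(c_{(1)}f(c_{(2)}))$. $\mathfrak{C}$ is a $B$-${}^*\mathfrak{C}$-bimodule with left $B$-action through $B\to A$ and right action $c\cdot f=c_{(1)}f(c_{(2)})$; ${}^*\mathfrak{C}$ is a $B$-${}^*\mathfrak{C}$-bimodule with $(b\cdot f)(c)=f(cb)$ and right action by multiplication. ${}_B\mathrm{Hom}_{{}^*\mathfrak{C}}$ denotes bimodule maps. $\mathfrak{C}^B=\{c\in\mathfrak{C}:bc=cb\ \forall b\in B\}$. $\mathfrak{C}$ is left $B$-locally quasi-Frobenius if there are a set $I$ and a $B$-${}^*\mathfrak{C}$-bimodule map $j=(j_\ell)_{\ell\in I}:\mathfrak{C}\to({}^*\mathfrak{C})^I$ such that for all $c_1,\dots,c_n\in\mathfrak{C}$ there is a finitely supported family $(z_\ell)_{\ell\in I}$ in $\mathfrak{C}^B$ with $c_i=\sum_\ell z_\ell\cdot j_\ell(c_i)$ for all $i$; it is left $B$-locally Frobenius if this holds with $I$ a singleton. An element $j\in{}_B\mathrm{Hom}_{{}^*\mathfrak{C}}(\mathfrak{C},{}^*\mathfrak{C})$ is locally left invertible for $\circ$ if for every finitely generated $k$-submodule $F\subseteq\mathfrak{C}$ there is $\bar\jmath_F\in{}_B\mathrm{Hom}_{{}^*\mathfrak{C}}({}^*\mathfrak{C},\mathfrak{C})$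 with $\bar\jmath_F(j(x))=x$ for all $x\in F$. The map $\circ$ is locally surjective if for every finitely generated $k$-submodule $F\subseteq\mathfrak{C}$ there are finitely many $j^\ell\in{}_B\mathrm{Hom}_{{}^*\mathfrak{C}}(\mathfrak{C},{}^*\mathfrak{C})$, $\bar\jmath^\ell\in{}_B\mathrm{Hom}_{{}^*\mathfrak{C}}({}^*\mathfrak{C},\mathfrak{C})$ with $\sum_\ell\bar\jmath^\ell(j^\ell(x))=x$ for all $x\in F$. A right $A$-module $M$ is weakly locally projective if every $m\in M$ equals $\sum_ie_if_i(m)$ for finitely many $e_i\in M$, $f_i\in\mathrm{Hom}_A(M,A)$. *)

From HB Require Import structures.
From mathcomp Require Import all_boot all_order all_algebra.
From Stdlib Require List.
Set Implicit Arguments. Unset Strict Implicit. Unset Printing Implicit Defensive.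
Import GRing.Theory.
Local Open Scope ring_scope.

(* A k-algebra (k commutative) is a ring A with a ring morphism k -> A whose
   image is central.  Zero rings are allowed. *)
Definition is_kalg (k : comPzRingType) (A : pzRingType) (i : {rmorphism k -> A}) :=
  forall (r : k) (a : A), i r * a = a * i r.

Definition addf (M N : zmodType) (f : M -> N) := forall x y, f (x + y) = f x + f y.

Definition is_bimod (A : pzRingType) (C : zmodType)
    (la : A -> C -> C) (ra : C -> A -> C) :=
  (forall a x y, la a (x + y) = la a x + la a y) /\
  (forall a b x, la (a + b) x = la a x + la b x) /\
  (forall x, la 1 x = x) /\
  (forall a b x, la (a * b) x = la a (la b x)) /\
  (forall a x y, ra (x + y) a = ra x a + ra y a) /\
  (forall a b x, ra x (a + b) = ra x a + ra x b) /\
  (forall x, ra x 1 = x) /\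
  (forall a b x, ra x (a * b) = ra (ra x a) b) /\
  (forall a b x, la a (ra x b) = ra (la a x) b).

(* ---------- equality in C (x)_A C and C (x)_A C (x)_A C ----------
   An element of C (x)_A C is represented by a finite list of pairs
   (sum of elementary tensors).  Two representatives denote the same element
   iff every A-balanced biadditive map (into any abelian group) takes the same
   value on them (universal property of the tensor product). *)
Definition balanced2 (A : pzRingType) (C : zmodType) (la : A -> C -> C)
    (ra : C -> A -> C) (M : zmodType) (f : C -> C -> M) :=
  [/\ (forall x y y', f x (y + y') = f x y + f x y'),
      (forall x x' y, f (x + x') y = f x y + f x' y)
    & (forall x a y, f (ra x a) y = f x (la a y))].

Definition tens2_eq (A : pzRingType) (C : zmodType) (la : A -> C -> C)
    (ra : C -> A -> C) (s t : seq (C * C)) :=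
  forall (M : zmodType) (f : C -> C -> M), balanced2 la ra f ->
    \sum_(p <- s) f p.1 p.2 = \sum_(p <- t) f p.1 p.2.

Definition balanced3 (A : pzRingType) (C : zmodType) (la : A -> C -> C)
    (ra : C -> A -> C) (M : zmodType) (f : C -> C -> C -> M) :=
  [/\ (forall x x' y z, f (x + x') y z = f x y z + f x' y z),
      (forall x y y' z, f x (y + y') z = f x y z + f x y' z),
      (forall x y z z', f x y (z + z') = f x y z + f x y z'),
      (forall x a y z, f (ra x a) y z = f x (la a y) z)
    & (forall x y a z, f x (ra y a) z = f x y (la a z))].

Definition tens3_eq (A : pzRingType) (C : zmodType) (la : A -> C -> C)
    (ra : C -> A -> C) (s t : seq (C * C * C)) :=
  forall (M : zmodType) (f : C -> C -> C -> M), balanced3 la ra f ->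
    \sum_(p <- s) f p.1.1 p.1.2 p.2 = \sum_(p <- t) f p.1.1 p.1.2 p.2.

(* (Delta id) Delta and (id Delta) Delta, as representatives in C(x)C(x)C *)
Definition comul_l (C : Type) (D : C -> seq (C * C)) (c : C) : seq (C * C * C) :=
  flatten [seq [seq (q.1, q.2, p.2) | q <- D p.1] | p <- D c].
Definition comul_r (C : Type) (D : C -> seq (C * C)) (c : C) : seq (C * C * C) :=
  flatten [seq [seq (p.1, q.1, q.2) | q <- D p.2] | p <- D c].

Record coring (k : comPzRingType) (A : pzRingType) (iA : {rmorphism k -> A}) := Coring {
  carrier :> zmodType;
  lact : A -> carrier -> carrier;
  ract : carrier -> A -> carrier;
  comul : carrier -> seq (carrier * carrier);
  counit : carrier -> A;
  bimodP : is_bimod lact ract;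
  kactP : forall (r : k) (x : carrier), lact (iA r) x = ract x (iA r);
  comul_addP : forall x y, tens2_eq lact ract (comul (x + y)) (comul x ++ comul y);
  comul_lP : forall a x, tens2_eq lact ract (comul (lact a x))
                                    [seq (lact a p.1, p.2) | p <- comul x];
  comul_rP : forall a x, tens2_eq lact ract (comul (ract x a))
                                    [seq (p.1, ract p.2 a) | p <- comul x];
  coassocP : forall c, tens3_eq lact ract (comul_l comul c) (comul_r comul c);
  counit_addP : addf counit;
  counit_lP : forall a x, counit (lact a x) = a * counit x;
  counit_rP : forall a x, counit (ract x a) = counit x * a;
  counit_1P : forall c, \sum_(p <- comul c) lact (counit p.1) p.2 = c;
  counit_2P : forall c, \sum_(p <- comul c) ract p.1 (counit p.2) = c
}.

Section CoringNotions.
Variables (k : comPzRingType) (A B : pzRingType).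
Variables (iA : {rmorphism k -> A}) (phi : {rmorphism B -> A}).
Variable (C : coring iA).

Local Notation la := (@lact _ _ _ C).
Local Notation ra := (@ract _ _ _ C).
Local Notation D := (@comul _ _ _ C).

(* *C = _A Hom(C, A): left A-linear maps; elements are functions C -> A *)
Definition in_dual (f : C -> A) := addf f /\ forall a x, f (la a x) = a * f x.

Definition dual_mul (f g : C -> A) : C -> A :=
  fun c => \sum_(p <- D c) g (ra p.1 (f p.2)).

Definition dual_act (c : C) (f : C -> A) : C :=
  \sum_(p <- D c) ra p.1 (f p.2).

Definition bactC (b : B) (c : C) : C := la (phi b) c.
Definition bactD (b : B) (f : C -> A) : C -> A := fun c => f (ra c (phi b)).

Definition homCD (j : C -> (C -> A)) :=
  [/\ (forall c, in_dual (j c)),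
      (forall x y c, j (x + y) c = j x c + j y c),
      (forall b c, j (bactC b c) = bactD b (j c))
    & (forall c f, in_dual f -> j (dual_act c f) = dual_mul (j c) f)].

Definition homDC (jb : (C -> A) -> C) :=
  [/\ (forall f g, in_dual f -> in_dual g -> jb (fun c => f c + g c) = jb f + jb g),
      (forall b f, in_dual f -> jb (bactD b f) = bactC b (jb f))
    & (forall f g, in_dual f -> in_dual g -> jb (dual_mul f g) = dual_act (jb f) g)].

Definition centralB (z : C) := forall b : B, la (phi b) z = ra z (phi b).

Definition kspan (xs : seq C) (x : C) :=
  exists r : nat -> k, x = \sum_(i < size xs) la (iA (r i)) (nth 0 xs i).

Definition locally_quasi_Frobenius :=
  exists (I : Type) (j : I -> C -> (C -> A)), (forall l, homCD (j l)) /\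
    forall cs : seq C, exists (z : I -> C) (supp : seq I),
      (forall l, centralB (z l)) /\
      (forall l, ~ List.In l supp -> z l = 0) /\
      List.NoDup supp /\
      (forall c, c \in cs -> c = \sum_(l <- supp) dual_act (z l) (j l c)).

Definition locally_Frobenius :=
  exists j : C -> (C -> A), homCD j /\
    forall cs : seq C, exists z : C, centralB z /\
      (forall c, c \in cs -> c = dual_act z (j c)).

Definition locally_left_invertible (j : C -> (C -> A)) :=
  homCD j /\ forall xs : seq C, exists jb : (C -> A) -> C, homDC jb /\
    forall x, kspan xs x -> jb (j x) = x.

Definition circ_locally_surjective :=
  forall xs : seq C, exists fam : seq ((C -> (C -> A)) * ((C -> A) -> C)),
    (forall p, List.In p fam -> homCD p.1 /\ homDC p.2) /\
    forall x, kspan xs x -> \sum_(p <- fam) p.2 (p.1 x) = x.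

Definition right_hom_A (f : C -> A) := addf f /\ forall x a, f (ra x a) = f x * a.

Definition weakly_locally_projective :=
  forall m : C, exists fam : seq (C * (C -> A)),
    (forall p, List.In p fam -> right_hom_A p.2) /\
    m = \sum_(p <- fam) ra p.1 (p.2 m).

End CoringNotions.

Arguments locally_left_invertible [k A B iA] phi C j.
Arguments homCD [k A B iA] phi C j.
Arguments homDC [k A B iA] phi C jb.

From Pilot Require Import Defs.
From HB Require Import structures.
From mathcomp Require Import all_boot all_order all_algebra.
From Stdlib Require List FinFun.
From Stdlib Require Import ClassicalEpsilon FunctionalExtensionality.
Set Implicit Arguments. Unset Strict Implicit. Unset Printing Implicit Defensive.
Import GRing.Theory.
Local Open Scope ring_scope.

(* A B-*C-bimodule map jb : *C -> C is determined by z := jb(eps), which lies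
   in C^B, through jb(f) = z.f; conversely every z in C^B gives such a map
   f |-> z.f, right *C-linearity being coassociativity.  Hence local left
   inverses of j are exactly the elements z of local Frobenius data, and finite
   sums of composites jb o j are exactly local quasi-Frobenius data.  Finally
   c = sum_l z_l.j_l(c) = sum_l (z_l)_(1) j_l(c)((z_l)_(2)), and each
   c |-> j_l(c)(d) is right A-linear, so C is weakly locally projective. *)

Lemma addf0 (M N : zmodType) (f : M -> N) : Defs.addf f -> f 0 = 0.
Proof. by move=> fD; apply: (@addrI _ (f 0)); rewrite -fD !addr0. Qed.

Lemma addf_sum (M N : zmodType) (f : M -> N) (I : Type) (s : seq I) (F : I -> M) :
  Defs.addf f -> f (\sum_(i <- s) F i) = \sum_(i <- s) f (F i).
Proof.
move=> fD; elim: s => [|x s IHs]; first by rewrite !big_nil addf0.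
by rewrite !big_cons fD IHs.
Qed.

Lemma In_nth (T : Type) (x0 : T) (s : seq T) i :
  (i < size s)%N -> List.In (nth x0 s i) s.
Proof. by elim: s i => [|x s IHs] [|i] //= lti; [left | right; apply: IHs]. Qed.

Section CoringDual.
Variables (k : comPzRingType) (A B : pzRingType).
Variables (iA : {rmorphism k -> A}) (phi : {rmorphism B -> A}) (C : coring iA).
Local Notation la := (@lact _ _ _ C).
Local Notation ra := (@ract _ _ _ C).
Local Notation D := (@comul _ _ _ C).
Local Notation eps := (@counit _ _ _ C).

Lemma lactDr a : Defs.addf (la a).
Proof. by move=> x y; case: (bimodP C). Qed.
Lemma lactDl (x : C) : Defs.addf (la^~ x).
Proof. by move=> a b; case: (bimodP C) => _ []. Qed.
Lemma lact1 (x : C) : la 1 x = x.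
Proof. by case: (bimodP C) => _ [] _ []. Qed.
Lemma ractDl a : Defs.addf (ra^~ a).
Proof. by move=> x y; case: (bimodP C) => _ [] _ [] _ [] _ []. Qed.
Lemma ractDr (x : C) : Defs.addf (ra x).
Proof. by move=> a b; case: (bimodP C) => _ [] _ [] _ [] _ [] _ []. Qed.
Lemma ractA a b (x : C) : ra x (a * b) = ra (ra x a) b.
Proof. by case: (bimodP C) => _ [] _ [] _ [] _ [] _ [] _ [] _ []. Qed.
Lemma lact_ract a b (x : C) : la a (ra x b) = ra (la a x) b.
Proof. by case: (bimodP C) => _ [] _ [] _ [] _ [] _ [] _ [] _ []. Qed.

Section ComulSum.
Variables (M : zmodType) (h : C -> C -> M).
Hypothesis h_bal : balanced2 la ra h.

Definition comul_sum (c : C) : M := \sum_(p <- D c) h p.1 p.2.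

Lemma comul_sum_additive : Defs.addf comul_sum.
Proof. by move=> x y; rewrite /comul_sum (comul_addP x y h_bal) big_cat. Qed.

Lemma comul_sum_lact a x : comul_sum (la a x) = \sum_(p <- D x) h (la a p.1) p.2.
Proof. by rewrite /comul_sum (comul_lP a x h_bal) big_map. Qed.

Lemma comul_sum_ract a x : comul_sum (ra x a) = \sum_(p <- D x) h p.1 (ra p.2 a).
Proof. by rewrite /comul_sum (comul_rP a x h_bal) big_map. Qed.
End ComulSum.

Lemma balanced_dual_act (f : C -> A) :
  in_dual f -> balanced2 la ra (fun x y => ra x (f y)).
Proof.
case=> fD fl; split=> [x y y'|x x' y|x a y]; first by rewrite fD ractDr.
  exact: ractDl.
by rewrite fl ractA.
Qed.

Lemma in_dual_counit : in_dual eps.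
Proof. by split; [exact: counit_addP | exact: counit_lP]. Qed.

Lemma in_dual_counit_mulr a : in_dual (fun c => eps c * a).
Proof.
split=> [x y|b x]; first by rewrite counit_addP mulrDl.
by rewrite counit_lP mulrA.
Qed.

Lemma dual_act_counit (z : C) : dual_act z eps = z.
Proof. exact: counit_2P. Qed.

Lemma dual_act_counit_mulr (z : C) a : dual_act z (fun c => eps c * a) = ra z a.
Proof.
rewrite /dual_act; under eq_bigr => p _ do rewrite ractA.
by rewrite -(addf_sum _ _ (ractDl a)) counit_2P.
Qed.

Lemma dual_mul_counitl (f : C -> A) : in_dual f -> dual_mul eps f = f.
Proof.
case=> fD _; apply: functional_extensionality => c.
by rewrite /dual_mul -(addf_sum _ _ fD) counit_2P.
Qed.

Lemma dual_actD (z : C) (f g : C -> A) :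
  dual_act z (fun c => f c + g c) = dual_act z f + dual_act z g.
Proof. by rewrite /dual_act -big_split; apply: eq_bigr => p _; rewrite ractDr. Qed.

Lemma dual_act_bact (z : C) b (f : C -> A) : centralB phi z -> in_dual f ->
  dual_act z (bactD phi b f) = bactC phi b (dual_act z f).
Proof.
move=> zB fd; have h_bal := balanced_dual_act fd.
rewrite /bactC /bactD (addf_sum _ _ (lactDr _)).
under [RHS]eq_bigr => p _ do rewrite lact_ract.
by rewrite -(comul_sum_lact h_bal) zB (comul_sum_ract h_bal).
Qed.

Lemma dual_act_mul (z : C) (f g : C -> A) : in_dual f -> in_dual g ->
  dual_act z (dual_mul f g) = dual_act (dual_act z f) g.
Proof.
move=> [fD fl] gd; case: (gd) => gD gl.
pose F x y w := ra x (g (ra y (f w))).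
have F_bal : balanced3 la ra F.
  split=> [x x' y w|x y y' w|x y w w'|x a y w|x y a w]; rewrite /F.
  - exact: ractDl.
  - by rewrite ractDl gD ractDr.
  - by rewrite fD ractDr gD ractDr.
  - by rewrite -ractA -gl lact_ract.
  - by rewrite -ractA fl.
(* Both sides are [F] summed over the two iterated comultiplications of [z]. *)
have coassoc := coassocP z F_bal.
rewrite /comul_l /comul_r !big_flatten !big_map in coassoc.
change (dual_act z (dual_mul f g) = comul_sum (fun x y => ra x (g y)) (dual_act z f)).
rewrite /dual_act (addf_sum _ _ (comul_sum_additive (balanced_dual_act gd))).
transitivity (\sum_(p <- D z) \sum_(q <- D p.2) F p.1 q.1 q.2).
  by apply: eq_bigr => p _; rewrite /dual_mul (addf_sum _ _ (ractDr _)).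
under eq_bigr => p _ do rewrite -(big_map (fun q => (p.1, q.1, q.2)) xpredT
  (fun t => F t.1.1 t.1.2 t.2)).
rewrite -coassoc; apply: eq_bigr => p _.
by rewrite big_map (comul_sum_ract (balanced_dual_act gd)).
Qed.

Lemma homDC_dual_act (z : C) : centralB phi z -> homDC phi C (dual_act z).
Proof.
move=> zB; split=> [f g _ _|b f|f g fd gd].
- exact: dual_actD.
- exact: dual_act_bact.
- exact: dual_act_mul.
Qed.

Lemma homDC_dual_actE jb (f : C -> A) :
  homDC phi C jb -> in_dual f -> jb f = dual_act (jb eps) f.
Proof.
by case=> _ _ jbM fd; rewrite -jbM ?dual_mul_counitl //; exact: in_dual_counit.
Qed.

Lemma homDC_centralB jb : homDC phi C jb -> centralB phi (jb eps).
Proof.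
move=> jb_hom; case: (jb_hom) => _ jbB _ b.
have bactD_counit : bactD phi b eps = fun c => eps c * phi b.
  by apply: functional_extensionality => c; rewrite /bactD counit_rP.
have := jbB b eps in_dual_counit; rewrite bactD_counit /bactC => <-.
by rewrite (homDC_dual_actE jb_hom (in_dual_counit_mulr _)) dual_act_counit_mulr.
Qed.

Lemma centralB0 : centralB phi (0 : C).
Proof. by move=> b; rewrite (addf0 (lactDr _)) (addf0 (ractDl _)). Qed.

Lemma homCD0 : homCD phi C (fun _ _ => 0).
Proof.
split=> [c|x y c|b c|c f [fD _]] //; first by split=> [x y|a x]; rewrite ?addr0 ?mulr0.
  by rewrite addr0.
apply: functional_extensionality => d; rewrite /dual_mul big1 // => p _.
by rewrite (addf0 (ractDr _)) (addf0 fD).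
Qed.

Lemma homCD_eval_right_hom j d : homCD phi C j -> right_hom_A (fun x => j x d).
Proof.
case=> j_dual jD _ jM; split=> [x y|x a]; first exact: jD.
rewrite -dual_act_counit_mulr (jM _ _ (in_dual_counit_mulr _)) /dual_mul.
under eq_bigr => p _ do rewrite counit_rP.
rewrite -big_distrl /=; congr (_ * a).
case: (j_dual x) => jxD jxl; rewrite -[in RHS](counit_1P d) (addf_sum _ _ jxD).
by apply: eq_bigr => p _; rewrite jxl.
Qed.

End CoringDual.

Section LocallyFrobenius.
Variables (k : comPzRingType) (A B : pzRingType).
Variables (iA : {rmorphism k -> A}) (iB : {rmorphism k -> B}).
Variables (phi : {rmorphism B -> A}) (C : coring iA).
Hypothesis phi_k : forall r : k, phi (iB r) = iA r.
Local Notation la := (@lact _ _ _ C).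
Local Notation D := (@comul _ _ _ C).
Local Notation eps := (@counit _ _ _ C).

Definition klinear (T : C -> C) :=
  Defs.addf T /\ forall r x, T (la (iA r) x) = la (iA r) (T x).

Lemma klinear_fix_kspan T xs x : klinear T ->
  (forall c, c \in xs -> T c = c) -> kspan xs x -> T x = x.
Proof.
case=> TD Tk xsT [r ->]; rewrite (addf_sum _ _ TD); apply: eq_bigr => i _.
by rewrite Tk xsT // mem_nth.
Qed.

Lemma kspan_mem xs (c : C) : c \in xs -> kspan xs c.
Proof.
move=> xs_c; have lti : (index c xs < size xs)%N by rewrite index_mem.
exists (fun i => if i == index c xs then 1 else 0).
rewrite (bigD1 (Ordinal lti)) //= eqxx rmorph1 lact1 nth_index // big1 ?addr0 //.
by move=> i i_ne; rewrite ifN // rmorph0 (addf0 (lactDl _)).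
Qed.

(* The k-action on C is the B-action through iB, which every bimodule map respects. *)
Lemma klinear_comp j jb : homCD phi C j -> homDC phi C jb -> klinear (fun x => jb (j x)).
Proof.
case=> j_dual jD jB _ [jbD jbB _]; split=> [x y|r x].
  have -> : j (x + y) = fun c => j x c + j y c.
    by apply: functional_extensionality => c; exact: jD.
  exact: jbD.
by have := jB (iB r) x; rewrite /bactC phi_k => ->; rewrite jbB // /bactC phi_k.
Qed.

Lemma klinear_sum (I : Type) (s : seq I) (T : I -> C -> C) :
  (forall i, klinear (T i)) -> klinear (fun x => \sum_(i <- s) T i x).
Proof.
move=> Tlin; split=> [x y|r x]; first by rewrite -big_split; apply: eq_bigr => i _; case: (Tlin i).
rewrite (addf_sum _ _ (lactDr _)); apply: eq_bigr => i _; by case: (Tlin i).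
Qed.

Lemma locally_Frobenius_left_invertible :
  locally_Frobenius phi C -> exists j, locally_left_invertible phi C j.
Proof.
case=> j [j_hom frob]; exists j; split=> // xs.
have [z [zB xs_z]] := frob xs; exists (dual_act z); split; first exact: homDC_dual_act.
move=> x; apply: (klinear_fix_kspan (T := fun x => dual_act z (j x))).
  exact: klinear_comp (homDC_dual_act zB).
by move=> c /xs_z /esym.
Qed.

Lemma left_invertible_locally_Frobenius j :
  locally_left_invertible phi C j -> locally_Frobenius phi C.
Proof.
case=> j_hom inv; exists j; split=> // cs.
have [jb [jb_hom jbK]] := inv cs; exists (jb eps); split; first exact: homDC_centralB.
move=> c cs_c; rewrite -(homDC_dual_actE jb_hom); last by case: j_hom.
by rewrite jbK //; exact: kspan_mem.
Qed.

Lemma locally_quasi_Frobenius_circ_surjective :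
  locally_quasi_Frobenius phi C -> circ_locally_surjective phi C.
Proof.
case=> I [j [j_hom frob]] xs; have [z [supp [zB [_ [_ xs_z]]]]] := frob xs.
exists [seq (j l, dual_act (z l)) | l <- supp]; split.
  by move=> _ /List.in_map_iff [l [<- _]]; split; [exact: j_hom | exact: homDC_dual_act].
move=> x; rewrite big_map.
apply: (klinear_fix_kspan (T := fun x => \sum_(l <- supp) dual_act (z l) (j l x))).
  by apply: klinear_sum => l; exact: klinear_comp (homDC_dual_act (zB l)).
by move=> c /xs_z /esym.
Qed.

Definition homCD_part (j : C -> C -> A) : C -> C -> A :=
  if excluded_middle_informative (homCD phi C j) then j else fun _ _ => 0.

Lemma homCD_part_hom j : homCD phi C (homCD_part j).
Proof. by rewrite /homCD_part; destruct excluded_middle_informative => //=; exact: homCD0. Qed.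

Lemma homCD_partE j : homCD phi C j -> homCD_part j = j.
Proof. by rewrite /homCD_part; destruct excluded_middle_informative. Qed.

(* The index set pairs a position in the family with the map j used there, so
   that the support is duplicate-free and does not depend on the family. *)
Lemma circ_surjective_locally_quasi_Frobenius :
  circ_locally_surjective phi C -> locally_quasi_Frobenius phi C.
Proof.
move=> surj; exists (nat * (C -> C -> A))%type, (fun l => homCD_part l.2).
split=> [l|cs]; first exact: homCD_part_hom.
have [fam [fam_hom fam_id]] := surj cs.
pose d : (C -> C -> A) * ((C -> A) -> C) := (fun _ _ => 0, dual_act 0).
have nth_hom i : homCD phi C (nth d fam i).1 /\ homDC phi C (nth d fam i).2.
  case: (ltnP i (size fam)) => [/(In_nth d)/fam_hom // | /(nth_default d) ->].
  by split; [exact: homCD0 | apply: homDC_dual_act; exact: centralB0].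
pose z (l : nat * (C -> C -> A)) : C :=
  if excluded_middle_informative (l.2 = (nth d fam l.1).1)
  then (nth d fam l.1).2 eps else 0.
have zE i : z (i, (nth d fam i).1) = (nth d fam i).2 eps.
  by rewrite /z; destruct excluded_middle_informative.
exists z, [seq (i, (nth d fam i).1) | i <- iota 0 (size fam)].
split; [|split; [|split]].
- move=> [i f]; rewrite /z; destruct excluded_middle_informative => /=.
    exact: homDC_centralB (nth_hom i).2.
  exact: centralB0.
- move=> [i f] not_supp; rewrite /z /=; destruct excluded_middle_informative as [->|] => //=.
  case: (ltnP i (size fam)) => [lti | /(nth_default d) ->]; last exact: dual_act_counit.
  case: not_supp; apply: (List.in_map (fun i => (i, (nth d fam i).1))).
  by apply/List.in_seq; split; [exact/leP | exact/ltP].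
- apply: FinFun.Injective_map_NoDup; first by move=> ? ? [].
  exact: List.seq_NoDup.
- move=> c cs_c; rewrite -[LHS]fam_id; last exact: kspan_mem.
  rewrite [LHS](big_nth d) big_map /index_iota subn0.
  apply: eq_bigr => i _; rewrite zE homCD_partE; last exact: (nth_hom i).1.
  by rewrite -(homDC_dual_actE (nth_hom i).2) //=; case: (nth_hom i).1.
Qed.

Lemma locally_Frobenius_quasi_Frobenius :
  locally_Frobenius phi C -> locally_quasi_Frobenius phi C.
Proof.
case=> j [j_hom frob]; exists unit, (fun _ => j); split=> // cs.
have [z [zB cs_z]] := frob cs; exists (fun _ => z), [:: tt].
split=> //; split; first by case=> not_tt; case: not_tt; left.
split; first by constructor; [case | constructor].
by move=> c /cs_z {1}->; rewrite big_seq1.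
Qed.

Lemma locally_quasi_Frobenius_weakly_locally_projective :
  locally_quasi_Frobenius phi C -> weakly_locally_projective C.
Proof.
case=> I [j [j_hom frob]] m; have [z [supp [_ [_ [_ m_z]]]]] := frob [:: m].
exists (flatten [seq [seq (p.1, fun x => j l x p.2) | p <- D (z l)] | l <- supp]).
split.
  move=> _ /List.in_concat [s [/List.in_map_iff [l [<- _]] /List.in_map_iff [p [<- _]]]].
  exact: homCD_eval_right_hom.
rewrite big_flatten big_map {1}(m_z m (mem_head _ _)).
by apply: eq_bigr => l _; rewrite big_map.
Qed.

End LocallyFrobenius.

Theorem theorem2p11 (k : comPzRingType) (A B : pzRingType)
    (iA : {rmorphism k -> A}) (iB : {rmorphism k -> B})
    (phi : {rmorphism B -> A})
    (hA : is_kalg iA) (hB : is_kalg iB)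
    (hphi : forall r : k, phi (iB r) = iA r)
    (C : coring iA) :
  (locally_Frobenius phi C <-> exists j, locally_left_invertible phi C j) /\
  (locally_quasi_Frobenius phi C <-> circ_locally_surjective phi C) /\
  ((locally_Frobenius phi C \/ (exists j, locally_left_invertible phi C j) \/
    locally_quasi_Frobenius phi C \/ circ_locally_surjective phi C) ->
   weakly_locally_projective C).
Proof.
have frob_lli : locally_Frobenius phi C <-> exists j, locally_left_invertible phi C j.
  split; first exact: locally_Frobenius_left_invertible hphi.
  by case=> j; exact: left_invertible_locally_Frobenius.
have qf_circ : locally_quasi_Frobenius phi C <-> circ_locally_surjective phi C.
  split; first exact: locally_quasi_Frobenius_circ_surjective hphi.
  exact: circ_surjective_locally_quasi_Frobenius.
split=> //; split=> // conds; apply: (locally_quasi_Frobenius_weakly_locally_projective (phi := phi)).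
case: conds => [|[/frob_lli|[|/qf_circ]]] //; exact: locally_Frobenius_quasi_Frobenius.
Qed.
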